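(* Let $\otimes$ and $\oplus$ be uninorms on $[0,1]$. Then $(\otimes,\oplus)$ satisfies the rearrangement inequality if and only if for all $0\leq x_1\leq x_2\leq 1$ and $0\leq y_1\leq y_2\leq 1$, $$(x_1\otimes y_1)\oplus (x_2\otimes y_2) \geq (x_1\otimes y_2)\oplus (x_2\otimes y_1).$$ Moreover, $(\otimes,\oplus)$ satisfies the dual rearrangement inequality if and only if for all $0\leq x_1\leq x_2\leq 1$ and $0\leq y_1\leq y_2\leq 1$, $$(x_1\oplus y_1)\otimes (x_2\oplus y_2) \leq (x_1\oplus y_2)\otimes (x_2\oplus y_1).$$
   Context: A uninorm is a function $\otimes:[0,1]^2\to[0,1]$ that is commutative, associative, monotonic (for all $x,y,z\in[0,1]$, $x\leq y$ implies $x\otimes z\leq y\otimes z$), and has an identity element $e\in[0,1]$ (i.e. $x\otimes e=x$ for all $x\in[0,1]$). For uninorms $\otimes,\oplus$, the pair $(\otimes,\oplus)$ satisfies the rearrangement inequality if for every $n\geq 1$, all $0\leq x_1\leq\cdots\leq x_n\leq 1$, $0\leq y_1\leq\cdots\leq y_n\leq 1$ and every permutation $\sigma$ of $\{1,\dots,n\}$, $$(x_n\otimes y_1)\oplus\cdots\oplus(x_1\otimes y_n)\leq (x_{\sigma(1)}\otimes y_1)\oplus\cdots\oplus(x_{\sigma(n)}\otimes y_n)\leq (x_1\otimes y_1)\oplus\cdots\oplus(x_n\otimes y_n).$$ It satisfies the dual rearrangement inequality if for all such $n$, $x_i$, $y_i$, $\sigma$, $$(x_n\oplus y_1)\otimes\cdots\otimes(x_1\oplus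 y_n)\geq (x_{\sigma(1)}\oplus y_1)\otimes\cdots\otimes(x_{\sigma(n)}\oplus y_n)\geq (x_1\oplus y_1)\otimes\cdots\otimes(x_n\oplus y_n).$$ (Iterated operations are well defined by associativity; the term $x_n\otimes y_1,\dots,x_1\otimes y_n$ means $x_{n+1-i}\otimes y_i$.) *)

From Stdlib Require Import Reals.
Open Scope R_scope.

(* A binary operation on [0,1], represented as a total function R -> R -> R
   whose behaviour is only constrained on [0,1]. *)
Definition in01 (x : R) : Prop := 0 <= x <= 1.

Definition is_uninorm (op : R -> R -> R) : Prop :=
  (forall x y, in01 x -> in01 y -> in01 (op x y)) /\
  (forall x y, in01 x -> in01 y -> op x y = op y x) /\
  (forall x y z, in01 x -> in01 y -> in01 z -> op x (op y z) = op (op x y) z) /\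
  (forall x y z, in01 x -> in01 y -> in01 z -> x <= y -> op x z <= op y z) /\
  (exists e, in01 e /\ forall x, in01 x -> op x e = x).

(* Iterated operation over indices 0..n (n+1 terms), left-associated:
   bigop op f n = f 0 op f 1 op ... op f n. *)
Fixpoint bigop (op : R -> R -> R) (f : nat -> R) (n : nat) : R :=
  match n with
  | O => f O
  | S m => op (bigop op f m) (f (S m))
  end.

Definition is_perm (n : nat) (s : nat -> nat) : Prop :=
  (forall i, (i < n)%nat -> (s i < n)%nat) /\
  (forall i j, (i < n)%nat -> (j < n)%nat -> s i = s j -> i = j).

(* Sequences indexed 0..n-1 (0-based version of x_1..x_n). *)
Definition sorted01 (n : nat) (x : nat -> R) : Prop :=
  (forall i, (i < n)%nat -> in01 (x i)) /\
  (forall i j, (i <= j)%nat -> (j < n)%nat -> x i <= x j).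

Definition rearrangement (otimes oplus : R -> R -> R) : Prop :=
  forall (n : nat) (x y : nat -> R) (s : nat -> nat),
    (1 <= n)%nat -> sorted01 n x -> sorted01 n y -> is_perm n s ->
    bigop oplus (fun i => otimes (x (n - 1 - i)%nat) (y i)) (n - 1) <=
    bigop oplus (fun i => otimes (x (s i)) (y i)) (n - 1) /\
    bigop oplus (fun i => otimes (x (s i)) (y i)) (n - 1) <=
    bigop oplus (fun i => otimes (x i) (y i)) (n - 1).

Definition dual_rearrangement (otimes oplus : R -> R -> R) : Prop :=
  forall (n : nat) (x y : nat -> R) (s : nat -> nat),
    (1 <= n)%nat -> sorted01 n x -> sorted01 n y -> is_perm n s ->
    bigop otimes (fun i => oplus (x (n - 1 - i)%nat) (y i)) (n - 1) >=
    bigop otimes (fun i => oplus (x (s i)) (y i)) (n - 1) /\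
    bigop otimes (fun i => oplus (x (s i)) (y i)) (n - 1) >=
    bigop otimes (fun i => oplus (x i) (y i)) (n - 1).

From Stdlib Require Import Reals Lra Lia FinFun.
Open Scope R_scope.

(* Necessity is the case n = 2 with the reversing permutation.  For sufficiency,
   the two-term inequality says that the array G a i = x_a ⊗ y_i is supermodular
   with respect to ⊕.  Given a permutation σ of {0..k}, let σ j = k; exchanging the
   entries at positions j and k changes only two terms of the commutative,
   associative and monotone iterated operation, and supermodularity shows that the
   value does not decrease.  The resulting permutation fixes k, so induction on k
   bounds every σ-sum by the diagonal sum.  The lower bound by the anti-diagonal is
   the same bound for the reversed order and the array with reversed rows.  The
   dual statement is the same argument with ⊗ iterated over x_a ⊕ y_i and ≥. *)

Lemma is_perm_surjective n s :
  is_perm n s -> forall v, (v < n)%nat -> exists j, (j < n)%nat /\ s j = v.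
Proof.
  intros [s_bound s_inj].
  exact (proj1 (bInjective_bSurjective s_bound) s_inj).
Qed.

Definition transpose (a b i : nat) : nat :=
  if Nat.eq_dec i a then b else if Nat.eq_dec i b then a else i.

Lemma is_perm_transpose n a b :
  (a < n)%nat -> (b < n)%nat -> is_perm n (transpose a b).
Proof.
  intros Ha Hb; split; intros; unfold transpose in *;
    repeat destruct Nat.eq_dec; lia.
Qed.

Lemma is_perm_comp n s t :
  is_perm n s -> is_perm n t -> is_perm n (fun i => s (t i)).
Proof.
  intros [s_bound s_inj] [t_bound t_inj]; split; auto.
Qed.

Lemma is_perm_restrict n s : is_perm (S n) s -> s n = n -> is_perm n s.
Proof.
  intros [s_bound s_inj] s_last; split; [|auto].
  intros i Hi.
  assert (s i <> n) by (intros E; assert (i = n) by (apply s_inj; lia); lia).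
  specialize (s_bound i); lia.
Qed.

Lemma is_perm_reverse n s : is_perm (S n) s -> is_perm (S n) (fun i => n - s i)%nat.
Proof.
  intros [s_bound s_inj]; split; [intros; lia|].
  intros i j Hi Hj E; apply s_inj; auto.
  pose proof (s_bound i Hi); pose proof (s_bound j Hj); lia.
Qed.

Lemma bigop_ext (B : R -> R -> R) (f f' : nat -> R) (k : nat) :
  (forall i, (i <= k)%nat -> f i = f' i) -> bigop B f k = bigop B f' k.
Proof.
  induction k as [|k IHk]; intros Hff'; simpl.
  - apply Hff'; lia.
  - rewrite IHk, (Hff' (S k)) by (try intros; try apply Hff'; lia); reflexivity.
Qed.

Definition set_at (f : nat -> R) (j : nat) (v : R) : nat -> R :=
  fun i => if Nat.eq_dec i j then v else f i.

Lemma set_at_in01 (f : nat -> R) j v m :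
  in01 v -> (forall i, (i <= m)%nat -> in01 (f i)) ->
  forall i, (i <= m)%nat -> in01 (set_at f j v i).
Proof. intros Hv Hf i Hi; unfold set_at; destruct Nat.eq_dec; auto. Qed.

Definition supermodular (le : R -> R -> Prop) (B : R -> R -> R)
    (G : nat -> nat -> R) (k : nat) : Prop :=
  forall a b i i', (a <= b)%nat -> (b <= k)%nat -> (i <= i')%nat -> (i' <= k)%nat ->
    le (B (G a i') (G b i)) (B (G a i) (G b i')).

Section CommutativeMonoid01.

Variable B : R -> R -> R.
Hypothesis B_in01 : forall x y, in01 x -> in01 y -> in01 (B x y).
Hypothesis B_comm : forall x y, in01 x -> in01 y -> B x y = B y x.
Hypothesis B_assoc : forall x y z, in01 x -> in01 y -> in01 z ->
  B x (B y z) = B (B x y) z.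
Variable e : R.
Hypothesis e_in01 : in01 e.
Hypothesis B_x_e : forall x, in01 x -> B x e = x.

Lemma bigop_in01 f k :
  (forall i, (i <= k)%nat -> in01 (f i)) -> in01 (bigop B f k).
Proof.
  induction k as [|k IHk]; intros Hf; simpl; [apply Hf; lia|].
  apply B_in01; [apply IHk; intros|]; apply Hf; lia.
Qed.

Lemma bigop_extract f m j :
  (forall i, (i <= m)%nat -> in01 (f i)) -> (j <= m)%nat ->
  bigop B f m = B (f j) (bigop B (set_at f j e) m).
Proof.
  induction m as [|m IHm]; intros Hf Hj; simpl.
  - replace j with 0%nat by lia; unfold set_at; simpl.
    rewrite B_x_e; auto.
  - assert (Hf_m : forall i, (i <= m)%nat -> in01 (f i)) by (intros; apply Hf; lia).
    destruct (Nat.eq_dec j (S m)) as [->|Hjm].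
    + unfold set_at at 2; destruct Nat.eq_dec; [|congruence].
      rewrite B_x_e by (apply bigop_in01, set_at_in01; auto).
      rewrite (bigop_ext B (set_at f (S m) e) f)
        by (intros i Hi; unfold set_at; destruct Nat.eq_dec; [lia|auto]).
      apply B_comm; [apply bigop_in01|apply Hf]; auto.
    + rewrite IHm by (auto; lia).
      replace (set_at f j e (S m)) with (f (S m))
        by (unfold set_at; destruct Nat.eq_dec; [lia|reflexivity]).
      symmetry; apply B_assoc; [apply Hf; lia | apply bigop_in01, set_at_in01; auto | apply Hf; lia].
Qed.

Lemma bigop_extract_pair f j k :
  (forall i, (i <= k)%nat -> in01 (f i)) -> (j < k)%nat ->
  bigop B f k = B (B (f j) (f k)) (bigop B (set_at (set_at f j e) k e) k).
Proof.
  intros Hf Hjk.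
  assert (Hf_j : forall i, (i <= k)%nat -> in01 (set_at f j e i)) by (apply set_at_in01; auto).
  rewrite (bigop_extract f k j), (bigop_extract (set_at f j e) k k) by (auto; lia).
  replace (set_at f j e k) with (f k)
    by (unfold set_at; destruct Nat.eq_dec; [lia|reflexivity]).
  apply B_assoc; [apply Hf; lia | apply Hf; lia | apply bigop_in01, set_at_in01; auto].
Qed.

Section Monotone.

Variable le : R -> R -> Prop.
Hypothesis le_refl : forall a, le a a.
Hypothesis le_trans : forall a b c, le a b -> le b c -> le a c.
Hypothesis B_mono : forall a b c, in01 a -> in01 b -> in01 c ->
  le a b -> le (B a c) (B b c).

Lemma bigop_exchange_le f f' j k :
  (j < k)%nat ->
  (forall i, (i <= k)%nat -> in01 (f i)) ->
  (forall i, (i <= k)%nat -> in01 (f' i)) ->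
  (forall i, (i <= k)%nat -> i <> j -> i <> k -> f i = f' i) ->
  le (B (f j) (f k)) (B (f' j) (f' k)) ->
  le (bigop B f k) (bigop B f' k).
Proof.
  intros Hjk Hf Hf' Hff' Hle.
  rewrite (bigop_extract_pair f j k), (bigop_extract_pair f' j k) by assumption.
  rewrite (bigop_ext B (set_at (set_at f' j e) k e) (set_at (set_at f j e) k e)).
  - apply B_mono; [apply B_in01; apply Hf; lia | apply B_in01; apply Hf'; lia | | exact Hle].
    apply bigop_in01; repeat apply set_at_in01; auto.
  - intros i Hi; unfold set_at.
    destruct (Nat.eq_dec i k), (Nat.eq_dec i j); auto.
    symmetry; apply Hff'; auto.
Qed.

Lemma bigop_perm_le_diag (G : nat -> nat -> R) k :
  (forall a i, (a <= k)%nat -> (i <= k)%nat -> in01 (G a i)) ->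
  supermodular le B G k ->
  forall s, is_perm (S k) s ->
  le (bigop B (fun i => G (s i) i) k) (bigop B (fun i => G i i) k).
Proof.
  induction k as [|k IHk]; intros G_in01 G_super s Hs; pose proof (proj1 Hs) as s_bound.
  - simpl; replace (s 0%nat) with 0%nat by (specialize (s_bound 0%nat); lia).
    apply le_refl.
  - assert (fixing_last : forall t, is_perm (S (S k)) t -> t (S k) = S k ->
      le (bigop B (fun i => G (t i) i) (S k)) (bigop B (fun i => G i i) (S k))).
    { intros t Ht t_last; simpl; rewrite t_last.
      pose proof (proj1 Ht) as t_bound.
      apply B_mono.
      - apply bigop_in01; intros i Hi; specialize (t_bound i); apply G_in01; lia.
      - apply bigop_in01; intros; apply G_in01; lia.
      - apply G_in01; lia.
      - apply IHk; [intros; apply G_in01; lia | intros ? ? ? ? ? ? ? ?; apply G_super; lia |].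
        apply is_perm_restrict; auto. }
    destruct (is_perm_surjective _ _ Hs (S k)) as [j [Hj s_j]]; [lia|].
    destruct (Nat.eq_dec j (S k)) as [->|Hjk]; [apply fixing_last; auto|].
    set (t := fun i => s (transpose j (S k) i)).
    assert (Ht : is_perm (S (S k)) t)
      by (apply (is_perm_comp _ s (transpose j (S k))); [exact Hs | apply is_perm_transpose; lia]).
    assert (t_last : t (S k) = S k)
      by (unfold t, transpose; repeat destruct Nat.eq_dec; lia).
    apply le_trans with (bigop B (fun i => G (t i) i) (S k)); [|apply fixing_last; auto].
    destruct Ht as [t_bound _].
    apply bigop_exchange_le with j; [lia | | | |].
    + intros i Hi; specialize (s_bound i); apply G_in01; lia.
    + intros i Hi; specialize (t_bound i); apply G_in01; lia.
    + intros i _ Hij Hik; unfold t, transpose.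
      repeat destruct Nat.eq_dec; congruence.
    + rewrite t_last; unfold t, transpose.
      destruct Nat.eq_dec; [|congruence].
      rewrite s_j, B_comm by (apply G_in01; specialize (s_bound (S k)); lia).
      apply G_super; specialize (s_bound (S k)); lia.
Qed.

End Monotone.

Lemma bigop_perm_bounds (le : R -> R -> Prop) (G : nat -> nat -> R) k s :
  (forall a, le a a) ->
  (forall a b c, le a b -> le b c -> le a c) ->
  (forall a b c, in01 a -> in01 b -> in01 c -> le a b -> le (B a c) (B b c)) ->
  (forall a i, (a <= k)%nat -> (i <= k)%nat -> in01 (G a i)) ->
  supermodular le B G k ->
  is_perm (S k) s ->
  le (bigop B (fun i => G (k - i)%nat i) k) (bigop B (fun i => G (s i) i) k) /\
  le (bigop B (fun i => G (s i) i) k) (bigop B (fun i => G i i) k).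
Proof.
  intros le_refl le_trans B_mono G_in01 G_super Hs.
  split; [|apply bigop_perm_le_diag; auto].
  rewrite (bigop_ext B (fun i => G (s i) i) (fun i => G (k - (k - s i))%nat i))
    by (intros i Hi; destruct Hs as [s_bound _]; specialize (s_bound i); f_equal; lia).
  apply (bigop_perm_le_diag (fun a b => le b a) le_refl
           (fun a b c Hab Hbc => le_trans c b a Hbc Hab)
           (fun a b c Ha Hb Hc => B_mono b a c Hb Ha Hc)
           (fun a i => G (k - a)%nat i)).
  - intros a i Ha Hi; apply G_in01; lia.
  - intros a b i i' Hab Hb Hii' Hi'.
    rewrite (B_comm (G (k - a)%nat i')), (B_comm (G (k - a)%nat i)) by (apply G_in01; lia).
    apply G_super; lia.
  - apply is_perm_reverse; auto.
Qed.

End CommutativeMonoid01.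

Definition two_term_rearrangement (otimes oplus : R -> R -> R) : Prop :=
  forall x1 x2 y1 y2, 0 <= x1 -> x1 <= x2 -> x2 <= 1 ->
    0 <= y1 -> y1 <= y2 -> y2 <= 1 ->
    oplus (otimes x1 y1) (otimes x2 y2) >= oplus (otimes x1 y2) (otimes x2 y1).

Definition two_term_dual_rearrangement (otimes oplus : R -> R -> R) : Prop :=
  forall x1 x2 y1 y2, 0 <= x1 -> x1 <= x2 -> x2 <= 1 ->
    0 <= y1 -> y1 <= y2 -> y2 <= 1 ->
    otimes (oplus x1 y1) (oplus x2 y2) <= otimes (oplus x1 y2) (oplus x2 y1).

Definition pair_seq (a b : R) : nat -> R := fun i => match i with O => a | _ => b end.

Lemma sorted01_pair a b : 0 <= a -> a <= b -> b <= 1 -> sorted01 2 (pair_seq a b).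
Proof.
  intros; split.
  - intros [|i] Hi; unfold in01; simpl; lra.
  - intros [|i] [|j] Hij Hj; simpl; lra || lia.
Qed.

Lemma is_perm_swap2 : is_perm 2 (fun i => 1 - i)%nat.
Proof. split; intros; lia. Qed.

Lemma sorted01_le n x a b :
  sorted01 n x -> (a <= b)%nat -> (b < n)%nat -> 0 <= x a /\ x a <= x b /\ x b <= 1.
Proof.
  intros [x_in01 x_mono] Hab Hb.
  pose proof (x_in01 a ltac:(lia)); pose proof (x_in01 b Hb); pose proof (x_mono a b Hab Hb).
  unfold in01 in *; lra.
Qed.

Section Uninorms.

Variables otimes oplus : R -> R -> R.
Hypothesis otimes_uninorm : is_uninorm otimes.
Hypothesis oplus_uninorm : is_uninorm oplus.

Lemma rearrangement_iff_two_term :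
  rearrangement otimes oplus <-> two_term_rearrangement otimes oplus.
Proof.
  destruct otimes_uninorm as [T_in01 _].
  destruct oplus_uninorm as [S_in01 [S_comm [S_assoc [S_mono [e [e_in01 S_x_e]]]]]].
  split.
  - intros Hrearr x1 x2 y1 y2 ? ? ? ? ? ?.
    destruct (Hrearr 2%nat (pair_seq x1 x2) (pair_seq y1 y2) _ ltac:(lia)
                (sorted01_pair x1 x2 ltac:(lra) ltac:(lra) ltac:(lra))
                (sorted01_pair y1 y2 ltac:(lra) ltac:(lra) ltac:(lra)) is_perm_swap2)
      as [_ Hsorted]; simpl in Hsorted.
    apply Rle_ge; rewrite S_comm by (apply T_in01; unfold in01; lra).
    exact Hsorted.
  - intros Htwo [|k] x y s Hn Hx Hy Hs; [lia|].
    replace (S k - 1)%nat with k by lia.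
    apply (bigop_perm_bounds oplus S_in01 S_comm S_assoc e e_in01 S_x_e Rle
             (fun a i => otimes (x a) (y i)) k s Rle_refl Rle_trans S_mono); [| |exact Hs].
    + intros a i Ha Hi; apply T_in01; [apply Hx | apply Hy]; lia.
    + intros a b i i' Hab Hb Hii' Hi'; apply Rge_le.
      destruct (sorted01_le _ x a b Hx) as [? [? ?]]; try lia.
      destruct (sorted01_le _ y i i' Hy) as [? [? ?]]; try lia.
      apply Htwo; assumption.
Qed.

Lemma dual_rearrangement_iff_two_term :
  dual_rearrangement otimes oplus <-> two_term_dual_rearrangement otimes oplus.
Proof.
  destruct oplus_uninorm as [S_in01 _].
  destruct otimes_uninorm as [T_in01 [T_comm [T_assoc [T_mono [e [e_in01 T_x_e]]]]]].
  split.
  - intros Hrearr x1 x2 y1 y2 ? ? ? ? ? ?.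
    destruct (Hrearr 2%nat (pair_seq x1 x2) (pair_seq y1 y2) _ ltac:(lia)
                (sorted01_pair x1 x2 ltac:(lra) ltac:(lra) ltac:(lra))
                (sorted01_pair y1 y2 ltac:(lra) ltac:(lra) ltac:(lra)) is_perm_swap2)
      as [_ Hsorted]; simpl in Hsorted.
    apply Rge_le; rewrite T_comm by (apply S_in01; unfold in01; lra).
    exact Hsorted.
  - intros Htwo [|k] x y s Hn Hx Hy Hs; [lia|].
    replace (S k - 1)%nat with k by lia.
    apply (bigop_perm_bounds otimes T_in01 T_comm T_assoc e e_in01 T_x_e Rge
             (fun a i => oplus (x a) (y i)) k s Rge_refl Rge_trans); [| | |exact Hs].
    + intros a b c Ha Hb Hc Hab; apply Rle_ge, T_mono; auto; lra.
    + intros a i Ha Hi; apply S_in01; [apply Hx | apply Hy]; lia.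
    + intros a b i i' Hab Hb Hii' Hi'; apply Rle_ge.
      destruct (sorted01_le _ x a b Hx) as [? [? ?]]; try lia.
      destruct (sorted01_le _ y i i' Hy) as [? [? ?]]; try lia.
      apply Htwo; assumption.
Qed.

End Uninorms.

Theorem theorem2 (otimes oplus : R -> R -> R) :
  is_uninorm otimes -> is_uninorm oplus ->
  (rearrangement otimes oplus <->
     (forall x1 x2 y1 y2, 0 <= x1 -> x1 <= x2 -> x2 <= 1 ->
        0 <= y1 -> y1 <= y2 -> y2 <= 1 ->
        oplus (otimes x1 y1) (otimes x2 y2) >= oplus (otimes x1 y2) (otimes x2 y1)))
  /\
  (dual_rearrangement otimes oplus <->
     (forall x1 x2 y1 y2, 0 <= x1 -> x1 <= x2 -> x2 <= 1 ->
        0 <= y1 -> y1 <= y2 -> y2 <= 1 ->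
        otimes (oplus x1 y1) (oplus x2 y2) <= otimes (oplus x1 y2) (oplus x2 y1))).
Proof.
  intros otimes_uninorm oplus_uninorm; split.
  - exact (rearrangement_iff_two_term otimes oplus otimes_uninorm oplus_uninorm).
  - exact (dual_rearrangement_iff_two_term otimes oplus otimes_uninorm oplus_uninorm).
Qed.
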